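(* Let $K$ be a finite field of characteristic $p$ and order $q$, and let $s$ be a positive integer with $\gcd(s,q-1)=1$. For any $u\in K$ there exist unique nonnegative integers $w_0,\dots,w_{p-1}$ with $w_0>0$, $\sum_{i=0}^{p-1}w_i=q$ and $W_u=\sum_{i=0}^{p-1}w_i\zeta^i$. If $s$ is nondegenerate over $K$, then $w_i<q$ for every $i\in\{0,\dots,p-1\}$ and $|W_u|<q$.
   Context: $\zeta=\exp(2\pi i/p)$, $\psi(x)=\zeta^{\mathrm{Tr}(x)}$ with $\mathrm{Tr}$ the absolute trace of $K$ to $\mathbb{F}_p$; $W_u=\sum_{x\in K}\psi(x^s-ux)$. The exponent $s$ is degenerate over $K$ if $s\equiv p^k\pmod{q-1}$ for some integer $k$, and nondegenerate otherwise. *)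

From HB Require Import structures.
From mathcomp Require Import all_boot all_order all_algebra all_field.
Set Implicit Arguments. Unset Strict Implicit. Unset Printing Implicit Defensive.
Import Order.TTheory GRing.Theory Num.Theory.
Local Open Scope ring_scope.

(* zeta = exp(2 pi i / p) in algC: n.-root (-1) has argument pi/n, so its
   square has argument 2 pi / p. *)
Definition zeta (p : nat) : algC := (p.-root (-1)) ^+ 2.

Definition absTr (K : finFieldType) (p : nat) (x : K) : K :=
  \sum_(j < logn p #|K|) x ^+ (p ^ j).

(* The representative in {0,..,p-1} of Tr x, viewed in the prime field. *)
Definition trNat (K : finFieldType) (p : nat) (x : K) : nat :=
  odflt 0%N (omap (@nat_of_ord p) [pick k : 'I_p | (k%:R : K) == absTr p x]).

Definition psi (K : finFieldType) (p : nat) (x : K) : algC :=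
  zeta p ^+ trNat p x.

Definition Wsum (K : finFieldType) (p s : nat) (u : K) : algC :=
  \sum_(x : K) psi p (x ^+ s - u * x).

Definition degenerate (K : finFieldType) (p s : nat) : Prop :=
  exists k : nat, (s = p ^ k %[mod #|K|.-1])%N.

(* Grouping the x in K by the value i of Tr(x^s - u x) gives W_u = sum_i w_i zeta^i
   with w_i the size of the i-th fibre, and w_0 > 0 since x = 0 lies in the fibre of 0.
   The minimal polynomial of zeta over Q is 1 + X + ... + X^(p-1), so a rational relation
   sum_i c_i zeta^i = 0 forces all c_i to be equal; with sum_i w_i = q this gives
   uniqueness.  If some w_i = q then Tr(x^s - u x) = 0 for all x, so the polynomial
   sum_j X^(e_j) - sum_j u^(p^j) X^(p^j), where x^(s p^j) = x^(e_j) with 1 <= e_j <= q-1,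
   vanishes on K; its degree is below q, so it is zero, and its coefficient at X^(e_0)
   is 1 unless e_0 = p^j for some j, i.e. unless s = p^j mod (q-1).  Finally |W_u| = q
   would force every nonzero term w_i zeta^i to be a positive real, i.e. w_0 = q. *)

From HB Require Import structures.
From mathcomp Require Import all_boot all_order all_algebra all_field.
From mathcomp Require Import zify.
Import Order.TTheory GRing.Theory Num.Theory.
Local Open Scope ring_scope.

Set Implicit Arguments. Unset Strict Implicit. Unset Printing Implicit Defensive.

Lemma zeta_prim_root p : prime p -> p.-primitive_root (zeta p).
Proof.
move=> p_pr; have p_gt0 := prime_gt0 p_pr; rewrite /zeta; set r := p.-root (-1).
have rp : r ^+ p = -1 by rewrite rootCK.
have zp1 : (r ^+ 2) ^+ p = 1 by rewrite exprAC rp sqrrN expr1n.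
have [m prim_m m_dvd] := prim_order_exists p_gt0 zp1.
have /orP[/eqP m1|/eqP <- //] : (m == 1%N) || (m == p) by case/primeP: p_pr => _; apply.
have r2 : r ^+ 2 = 1 by rewrite m1 in prim_m; rewrite -[r ^+ 2]expr1 prim_expr_order.
have /eqP : (r - 1) * (r + 1) = 0 by rewrite -subr_sqr r2 expr1n subrr.
rewrite mulf_eq0 subr_eq0 addr_eq0 => /orP[/eqP r1 | /eqP rN1].
  by move/eqP: rp; rewrite r1 expr1n -subr_eq0 opprK -(natrD _ 1 1) pnatr_eq0.
by have := rootC_lt0 (-1 : algC) (prime_gt1 p_pr); rewrite -/r rN1 ltrN10.
Qed.

Lemma rat_comb_prim_root_eq0_const p (z : algC) (c : 'I_p -> rat) :
  prime p -> p.-primitive_root z ->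
  \sum_(i < p) ratr (c i) * z ^+ i = 0 -> forall i j, c i = c j.
Proof.
case: p c => [//|n] c p_pr prim_z c_z.
(* [R] has [z] as a root, yet its degree is below [n], that of the minimal
   polynomial of [z] (the [n.+1]-th cyclotomic polynomial). *)
pose cn := c ord_max; pose R := \poly_(i < n) (c (inord i) - cn).
suff R0 : R = 0.
  suff cE i : c i = cn by move=> i j; rewrite !cE.
  have [i_lt_n|i_ge_n] := ltnP i n.
    have /eqP := congr1 (fun P : {poly rat} => P`_i) R0.
    by rewrite coef0 coef_poly i_lt_n inord_val subr_eq0 => /eqP.
  by rewrite /cn; congr c; apply/val_inj/eqP; rewrite /= eqn_leq i_ge_n -ltnS andbT.
have z_sum0 : \sum_(i < n.+1) z ^+ i = 0.
  have z_neq1 : z - 1 != 0.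
    by rewrite subr_eq0 -[z]expr1 -(prim_order_dvd prim_z) dvdn1 (gtn_eqF (prime_gt1 p_pr)).
  by apply: (mulfI z_neq1); rewrite mulr0 -subrX1 prim_expr_order // subrr.
have rootR : root (map_poly ratr R) z.
  apply/eqP; rewrite /R poly_def rmorph_sum horner_sum /=.
  under eq_bigr => i _ do rewrite map_polyZ map_polyXn hornerZ hornerXn rmorphB /= mulrBl.
  rewrite sumrB -mulr_sumr.
  move: c_z z_sum0; rewrite !big_ord_recr /= => /eqP; rewrite addr_eq0 => /eqP c_z.
  move/eqP; rewrite addr_eq0 => /eqP z_sum0.
  rewrite z_sum0 (_ : \sum_(i < n) _ = - (ratr cn * z ^+ n)) ?mulrN ?opprK ?addNr //.
  rewrite -c_z; apply: eq_bigr => i _.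
  by rewrite -[widen_ord _ i]inord_val.
apply: contraTeq rootR => R_neq0.
have [P [minP _] dvdP] := minCpolyP z.
rewrite dvdP; apply/negP => /(dvdp_leq R_neq0); apply/negP; rewrite -ltnNge.
have -> : size P = n.+1.
  rewrite -(size_map_poly (ratr : {rmorphism rat -> algC})) -minP.
  by rewrite (minCpoly_cyclotomic prim_z) size_cyclotomic totient_prime.
exact: size_poly.
Qed.

Lemma natr_comb_prim_root_inj p (z : algC) (a b : 'I_p -> nat) :
  prime p -> p.-primitive_root z -> (\sum_i a i = \sum_i b i)%N ->
  \sum_(i < p) (a i)%:R * z ^+ i = \sum_(i < p) (b i)%:R * z ^+ i -> a =1 b.
Proof.
move=> p_pr prim_z sum_ab comb_ab.
pose c i : rat := (a i)%:R - (b i)%:R.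
have c_z : \sum_i ratr (c i) * z ^+ i = 0.
  under eq_bigr => i _ do rewrite rmorphB /= !ratr_nat mulrBl.
  by rewrite sumrB comb_ab subrr.
have c_sum : \sum_i c i = 0 by rewrite sumrB -!natr_sum sum_ab subrr.
suff c0 i : c i = 0 by move=> i; apply/eqP; rewrite -(eqr_nat rat) -subr_eq0 -/(c i) c0.
move: c_sum.
under eq_bigr => j _ do rewrite (rat_comb_prim_root_eq0_const p_pr prim_z c_z j i).
by rewrite sumr_const card_ord => /eqP; rewrite mulrn_eq0 (gtn_eqF (prime_gt0 p_pr)) => /eqP.
Qed.

Lemma norm_natr_comb_prim_root_lt n (z : algC) (w : 'I_n -> nat) (i0 : 'I_n) :
  n.-primitive_root z -> i0 = 0%N :> nat -> (0 < w i0 < \sum_i w i)%N ->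
  `|\sum_i (w i)%:R * z ^+ i| < (\sum_i w i)%:R.
Proof.
move=> prim_z i0_0 /andP[w0_gt0 w0_lt].
have z_norm : `|z| = 1.
  apply/eqP; rewrite -(pexpr_eq1 (prim_order_gt0 prim_z)) // -normrX.
  by rewrite prim_expr_order // normr1.
pose F i := (w i)%:R * z ^+ i.
have F_norm i : `|F i| = (w i)%:R.
  by rewrite normrM normrX z_norm expr1n mulr1 normr_nat.
have -> : (\sum_i w i)%:R = \sum_i `|F i|.
  by rewrite natr_sum; apply: eq_bigr => i _; rewrite F_norm.
rewrite lt_neqAle ler_norm_sum andbT; apply/negP => /eqP/normC_sum_eq[t _ F_t].
have t1 : t = 1.
  have w0_neq0 : (w i0)%:R != 0 :> algC by rewrite pnatr_eq0 -lt0n.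
  by move: (F_t i0 isT); rewrite F_norm /F i0_0 expr0 => /(mulfI w0_neq0).
have w_eq0 i : i != i0 -> w i = 0%N.
  move=> i_neq; apply/eqP; apply: contraNT i_neq; rewrite -lt0n => wi_gt0.
  have wi_neq0 : (w i)%:R != 0 :> algC by rewrite pnatr_eq0 -lt0n.
  move: (F_t i isT); rewrite F_norm t1 /F => /(mulfI wi_neq0)/eqP.
  rewrite -(expr0 z) (eq_prim_root_expr prim_z) mod0n modn_small //.
  by rewrite -val_eqE /= i0_0.
by move: w0_lt; rewrite (bigD1 i0) //= big1 ?addn0 ?ltnn // => i /w_eq0.
Qed.

Lemma pchar_natX (R : nzRingType) p j : p \in [pchar R] -> [pchar R].-nat (p ^ j)%N.
Proof.
by move=> pR; rewrite pnatX (eq_pnat _ (pcharf_eq pR)) (pnat_id (pcharf_prime pR)).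
Qed.

Lemma exprBn_pchar (R : comNzRingType) p (x y : R) j :
  p \in [pchar R] -> (x - y) ^+ (p ^ j) = x ^+ (p ^ j) - y ^+ (p ^ j).
Proof. by move=> pR; rewrite exprDn_pchar ?exprNn_pchar ?(pchar_natX j pR). Qed.

Lemma natr_inj_pchar (R : nzRingType) p k l : p \in [pchar R] ->
  (k < p)%N -> (l < p)%N -> k%:R = l%:R :> R -> k = l.
Proof.
move=> pR; wlog le_kl : k l / (k <= l)%N => [wlog_kl k_lt l_lt kl_eq|].
  by case: (leqP k l) => [|/ltnW] le; [apply: wlog_kl | apply/esym/wlog_kl].
move=> _ l_lt kl_eq; apply/eqP; rewrite eqn_leq le_kl -subn_eq0 /=.
have : (p %| l - k)%N by rewrite (dvdn_pcharf pR) natrB // kl_eq subrr.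
by case: posnP => // lk_gt0; rewrite gtnNdvd // (leq_ltn_trans (leq_subr k l)).
Qed.

Lemma frobenius_fixed_natr (R : idomainType) p (y : R) :
  p \in [pchar R] -> y ^+ p = y -> exists k : 'I_p, k%:R = y.
Proof.
move=> pR y_fixed; have p_gt1 := prime_gt1 (pcharf_prime pR).
have [k /eqP <-|no_k] := pickP (fun k : 'I_p => k%:R == y); first by exists k.
pose P : {poly R} := 'X^p - 'X.
have P_size : size P = p.+1.
  have X_size : (size (- 'X : {poly R}) < size ('X^p : {poly R}))%N.
    by rewrite size_polyN size_polyX size_polyXn ltnS.
  by rewrite /P size_polyDl // size_polyXn.
pose rs := y :: [seq (val k)%:R | k <- enum 'I_p].
have P_root x : x ^+ p = x -> root P x by rewrite /root !hornerE => ->; rewrite subrr.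
have rs_roots : all (root P) rs.
  rewrite /= P_root //; apply/allP => _ /mapP[k _ ->]; apply: P_root.
  by rewrite -pFrobenius_autE pFrobenius_aut_nat.
have rs_uniq : uniq rs.
  rewrite /= map_inj_uniq ?enum_uniq ?andbT.
    by apply/mapP => -[k _ k_y]; move: (no_k k); rewrite -k_y eqxx.
  by move=> k l /(natr_inj_pchar pR (ltn_ord k) (ltn_ord l))/val_inj.
have P_neq0 : P != 0 by rewrite -size_poly_eq0 P_size.
have := max_poly_roots P_neq0 rs_roots rs_uniq.
by rewrite P_size /= size_map size_enum_ord ltnn.
Qed.

(* Reducing the exponent into [1, #|F|.-1] rather than [0, #|F|.-2] keeps the
   identity true at [x = 0]. *)
Lemma expf_pred_mod (F : finFieldType) (x : F) a :
  (0 < a)%N -> x ^+ a = x ^+ (a.-1 %% #|F|.-1).+1.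
Proof.
move=> a_gt0; have [->|x_neq0] := eqVneq x 0; first by rewrite !expr0n gtn_eqF.
have x_order : x ^+ #|F|.-1 = 1.
  apply: (mulfI x_neq0); rewrite -exprS prednK ?expf_card ?mulr1 //.
  exact: ltnW (finNzRing_gt1 F).
by rewrite exprS (expr_mod _ x_order) -exprS prednK.
Qed.

Lemma finField_poly_eq0 (F : finFieldType) (P : {poly F}) :
  (size P <= #|F|)%N -> (forall x, root P x) -> P = 0.
Proof.
move=> P_size P_root; apply: (roots_geq_poly_eq0 (rs := enum F)).
- by apply/allP => x _; apply: P_root.
- exact: enum_uniq.
- by rewrite -cardE.
Qed.

Lemma mul_expn_neq_mod p n s j : (1 < p)%N -> coprime s (p ^ n).-1 ->
  (0 < j < n)%N -> (s * p ^ j != s %[mod (p ^ n).-1])%N.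
Proof.
move=> p_gt1 s_coprime /andP[j_gt0 j_lt_n].
have pj_gt1 : (1 < p ^ j)%N by rewrite -(expn0 p) ltn_exp2l.
have pj_lt : (p ^ j < p ^ n)%N by rewrite ltn_exp2l.
rewrite eqn_mod_dvd ?leq_pmulr ?expn_gt0 ?(ltnW p_gt1) //.
rewrite -{2}[s]muln1 -mulnBr Gauss_dvdr 1?coprime_sym // gtnNdvd //; lia.
Qed.

Section AbsoluteTrace.
Variables (K : finFieldType) (p : nat).
Hypothesis pK : p \in [pchar K].

Lemma absTr0 : absTr p (0 : K) = 0.
Proof.
rewrite /absTr big1 // => j _.
by rewrite expr0n expn_eq0 (gtn_eqF (prime_gt0 (pcharf_prime pK))).
Qed.

Lemma absTr_frobenius (x : K) : absTr p x ^+ p = absTr p x.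
Proof.
rewrite /absTr -pFrobenius_autE rmorph_sum /=.
under eq_bigr => j _ do rewrite pFrobenius_autE -exprM -expnSr.
have card_K : #|K| = (p ^ logn p #|K|)%N := card_pprimeChar pK.
case: (logn p #|K|) card_K => [|n] card_K; first by rewrite !big_ord0.
rewrite big_ord_recr big_ord_recl /= -card_K expf_card expn0 expr1 addrC.
by congr (_ + _); apply: eq_bigr => j _; rewrite /bump /= add1n.
Qed.

Lemma trNat_lt (x : K) : (trNat p x < p)%N.
Proof.
rewrite /trNat; case: pickP => [k _|_] /=; first exact: ltn_ord.
exact: prime_gt0 (pcharf_prime pK).
Qed.

Lemma natr_trNat (x : K) : (trNat p x)%:R = absTr p x.
Proof.
rewrite /trNat.
case: (pickP (fun k : 'I_p => (k%:R : K) == absTr p x)) => [k /eqP //|no_k].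
have [k k_Tr] := frobenius_fixed_natr pK (absTr_frobenius x).
by move: (no_k k); rewrite k_Tr eqxx.
Qed.

Lemma trNat_eq0 (x : K) : (trNat p x == 0%N) = (absTr p x == 0).
Proof.
rewrite -natr_trNat -(dvdn_pcharf pK).
by case: posnP => [->|t_gt0]; rewrite ?dvdn0 // gtnNdvd ?trNat_lt // gtn_eqF.
Qed.

Lemma trNat0 : trNat p (0 : K) = 0%N.
Proof. by apply/eqP; rewrite trNat_eq0 absTr0. Qed.

Lemma degenerate_of_absTr_vanish s u : (0 < s)%N -> coprime s #|K|.-1 ->
  (forall x : K, absTr p (x ^+ s - u * x) = 0) -> degenerate K p s.
Proof.
move=> s_gt0 s_coprime Tr0; have p_gt1 := prime_gt1 (pcharf_prime pK).
have card_K : #|K| = (p ^ logn p #|K|)%N := card_pprimeChar pK.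
set n := logn p #|K| in card_K *; set m := #|K|.-1 in s_coprime *.
have m_gt0 : (0 < m)%N by rewrite /m -subn1 subn_gt0 finNzRing_gt1.
have n_gt0 : (0 < n)%N by move: (finNzRing_gt1 K); rewrite card_K; case: (n).
have spj_gt0 j : (0 < s * p ^ j)%N by rewrite muln_gt0 s_gt0 expn_gt0 ltnW.
pose e j := ((s * p ^ j).-1 %% m).+1.
pose P : {poly K} := \sum_(j < n) ('X^(e j) - u ^+ (p ^ j) *: 'X^(p ^ j)).
have P0 : P = 0.
  apply: finField_poly_eq0 => [|x].
    apply: (leq_trans (size_sum _ _ _)); apply/bigmax_leqP => j _.
    apply: (leq_trans (size_polyD _ _)); rewrite size_polyN geq_max size_polyXn.
    rewrite (leq_trans (size_scale_leq _ _)) ?size_polyXn.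
      by rewrite andbT -[#|K|]prednK ?(ltnW (finNzRing_gt1 K)) // ltnS ltn_pmod.
    by rewrite card_K ltn_exp2l.
  apply/eqP; rewrite -[RHS](Tr0 x) /P horner_sum /absTr; apply: eq_bigr => j _.
  rewrite hornerD hornerN hornerZ !hornerXn exprBn_pchar // exprMn -exprM.
  by rewrite -expf_pred_mod.
have [j e0_j|no_j] := pickP (fun j : 'I_n => e 0%N == p ^ j)%N.
  exists j; rewrite -(eqP e0_j) /e expn0 muln1 -addn1 modnDml addn1 prednK //.
have := congr1 (fun Q : {poly K} => Q`_(e 0%N)) P0.
rewrite coef0 coef_sum (bigD1 (Ordinal n_gt0)) //= big1 => [|j j_neq0].
  rewrite coefB coefZ !coefXn eqxx; move: (no_j (Ordinal n_gt0)) => /= ->.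
  by rewrite mulr0 subr0 addr0 => /eqP; rewrite oner_eq0.
have j_gt0 : (0 < j)%N by rewrite lt0n; move: j_neq0; rewrite -val_eqE.
rewrite coefB coefZ !coefXn no_j mulr0 subr0 eq_sym eqSS -(eqn_modDr 1) !addn1.
rewrite !prednK ?spj_gt0 // expn0 muln1 /m card_K in s_coprime *.
by rewrite (negbTE (mul_expn_neq_mod p_gt1 s_coprime _)) // j_gt0 ltn_ord.
Qed.

End AbsoluteTrace.

Lemma sum_fibers (T : finType) (V : nmodType) n (h : T -> nat) (F : nat -> V) :
  (forall x, h x < n)%N -> \sum_x F (h x) = \sum_(i < n) F i *+ #|[pred x | h x == i]|.
Proof.
move=> h_lt; rewrite (partition_big (fun x => Ordinal (h_lt x)) xpredT) //=.
apply: eq_bigr => i _; rewrite -sumr_const.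
by apply: eq_big => [x | x /eqP <-] //; rewrite inE -val_eqE.
Qed.

Lemma card_fibers (T : finType) n (h : T -> nat) :
  (forall x, h x < n)%N -> (\sum_(i < n) #|[pred x | h x == i]|)%N = #|T|.
Proof.
move=> h_lt; rewrite -sum1_card (sum_fibers (fun=> 1%N) h_lt).
by apply: eq_bigr => i _; rewrite natn.
Qed.

Definition Wcount (K : finFieldType) (p s : nat) (u : K) (i : nat) : nat :=
  #|[pred x : K | trNat p (x ^+ s - u * x) == i]|.

Section TraceFibers.
Variables (K : finFieldType) (p s : nat) (u : K).
Hypothesis pK : p \in [pchar K].

Lemma Wsum_Wcount : Wsum p s u = \sum_(i < p) (Wcount p s u i)%:R * zeta p ^+ i.
Proof.
rewrite /Wsum /psi (sum_fibers (fun i => zeta p ^+ i) (fun x => trNat_lt pK _)).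
by apply: eq_bigr => i _; rewrite mulr_natl.
Qed.

Lemma sum_Wcount : (\sum_(i < p) Wcount p s u i)%N = #|K|.
Proof. exact: card_fibers (fun x => trNat_lt pK _). Qed.

Lemma Wcount0_gt0 : (0 < s)%N -> (0 < Wcount p s u 0)%N.
Proof.
move=> s_gt0; apply/card_gt0P; exists 0.
by rewrite inE /= expr0n (gtn_eqF s_gt0) mulr0 subr0 trNat0.
Qed.

Lemma Wcount_lt_card i : (0 < s)%N -> coprime s #|K|.-1 -> ~ degenerate K p s ->
  (Wcount p s u i < #|K|)%N.
Proof.
move=> s_gt0 s_coprime nondeg; rewrite ltn_neqAle max_card andbT.
apply: contra_notN nondeg => /eqP fiber_full.
have /subset_cardP/(_ (subset_predT _)) fiber_eq := fiber_full.
apply: (degenerate_of_absTr_vanish pK s_gt0 s_coprime (u := u)) => x.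
apply/eqP; rewrite -trNat_eq0 //; move: (fiber_eq x) (fiber_eq 0); rewrite !inE /=.
by rewrite expr0n (gtn_eqF s_gt0) mulr0 subr0 trNat0 // => /eqP -> /eqP <-.
Qed.

End TraceFibers.

Theorem lemma3p2 (K : finFieldType) (p : nat) (hp : p \in [pchar K])
  (s : nat) (hs : (0 < s)%N) (hcop : coprime s #|K|.-1) (u : K) :
  exists w : {ffun 'I_p -> nat},
    [/\ (forall i : 'I_p, nat_of_ord i = 0%N -> (0 < w i)%N),
        (\sum_(i < p) w i)%N = #|K|,
        Wsum p s u = \sum_(i < p) (w i)%:R * zeta p ^+ i,
        (forall w' : {ffun 'I_p -> nat},
            (forall i : 'I_p, nat_of_ord i = 0%N -> (0 < w' i)%N) ->
            (\sum_(i < p) w' i)%N = #|K| ->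
            Wsum p s u = \sum_(i < p) (w' i)%:R * zeta p ^+ i ->
            w' = w)
      & (~ degenerate K p s ->
          (forall i : 'I_p, (w i < #|K|)%N) /\ `|Wsum p s u| < (#|K|)%:R)].
Proof.
have p_pr := pcharf_prime hp; have zeta_p := zeta_prim_root p_pr.
pose w := [ffun i : 'I_p => Wcount p s u i].
have w_sum : (\sum_(i < p) w i)%N = #|K|.
  by rewrite -(sum_Wcount s u hp); apply: eq_bigr => i _; rewrite ffunE.
have w_Wsum : Wsum p s u = \sum_(i < p) (w i)%:R * zeta p ^+ i.
  by rewrite (Wsum_Wcount s u hp); apply: eq_bigr => i _; rewrite ffunE.
have w0_gt0 (i : 'I_p) : i = 0%N :> nat -> (0 < w i)%N.
  by move=> i0; rewrite ffunE i0 Wcount0_gt0.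
have w_lt i : ~ degenerate K p s -> (w i < #|K|)%N.
  by move=> nondeg; rewrite ffunE Wcount_lt_card.
exists w; split=> // [w' _ w'_sum w'_Wsum | nondeg].
  apply/ffunP; apply: (natr_comb_prim_root_inj p_pr zeta_p).
    by rewrite w'_sum w_sum.
  by rewrite -w'_Wsum w_Wsum.
split=> [i|]; first exact: w_lt.
pose i0 := Ordinal (prime_gt0 p_pr).
rewrite w_Wsum -w_sum; apply: (norm_natr_comb_prim_root_lt (i0 := i0) zeta_p) => //.
by rewrite w0_gt0 // w_sum w_lt.
Qed.
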